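(* There exists a stably correct CRN protocol $\Pi=(\mathcal{S},\mathcal{R})$ such that $\operatorname{RT}_{\mathrm{stab}}^{\Pi}(n)=O(\log n)$, but if the minimum in the definition of $\operatorname{RT}_{\mathrm{stab}}^{\Pi}(n)$ is restricted to runtime policies $\varrho$ with $\varrho(\mathbf{c})\subseteq\mathcal{E}(\mathbf{c})$ for every configuration $\mathbf{c}$, then the resulting quantity is $\Omega(n)$.
   Context: $\mathcal{E}(\mathbf{c})$ denotes the set of reactions that escape from the strongly connected component of $\mathbf{c}$ in the configuration digraph $D^{\Pi}$ (which has an $\alpha$-labeled edge $\mathbf{c}\to\alpha(\mathbf{c})$ for each configuration $\mathbf{c}$ and each $\alpha\in\operatorname{app}(\mathbf{c})$); a reaction $\alpha$ escapes from a component $S$ if $\alpha\in\operatorname{app}(\mathbf{c})$ and $\alpha(\mathbf{c})\notin S$ for all $\mathbf{c}\in S$. CRN model: $\Pi=(\mathcal{S},\mathcal{R})$, finite species set, finite reaction set $\mathcal{R}\subset\mathbb{N}^{\mathcal{S}}\times\mathbb{N}^{\mathcal{S}}$; reactions $(\mathbf{r},\mathbf{p})$ with $\|\mathbf{r}\|_1\in\{1,2\}$, $\|\mathbf{r}\|_1\le\|\mathbf{p}\|_1$; every $\mathbf{r}$ with $1\le\|\mathbf{r}\|_1\le2$ has a nonempty set $\mathcal{R}(\mathbf{r})$ of reactions; void reactions ($\mathbf{r}=\mathbf{p}$) alone in their $\mathcal{R}(\mathbf{r})$; $\operatorname{NV}(\mathcal{R})$ non-void; finite density. Configurations $\mathbf{c}\in\mathbb{N}^{\mathcal{S}}$,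 $\|\mathbf{c}\|_1\ge1$; applicability $\mathbf{r}\le\mathbf{c}$, result $\alpha(\mathbf{c})=\mathbf{c}-\mathbf{r}+\mathbf{p}$; $\operatorname{app}(\mathbf{c})$; reachability $\stackrel{*}{\rightharpoonup}$; $\mathrm{stab}(Z)=\{\mathbf{c}\in Z:\mathbf{c}\stackrel{*}{\rightharpoonup}\mathbf{c}'\Rightarrow\mathbf{c}'\in Z\}$. Weakly fair executions $\langle\mathbf{c}^t,\alpha^t\rangle$: every reaction applicable at step $t$ is later scheduled or becomes inapplicable. Correctness is w.r.t. an interface $\mathcal{I}=(\mathcal{U},\mu,\mathcal{C})$ giving target sets $Z_{\mathcal{I}}(\mathbf{c}^0)=\{\mathbf{c}:(\mu(\mathbf{c}^0),\mu(\mathbf{c}))\in\mathcal{C}\}$ and valid initial configurations (those with $Z_{\mathcal{I}}(\mathbf{c}^0)\ne\emptyset$); stably correct: every weakly fair valid execution reaches $\mathrm{stab}(Z_{\mathcal{I}}(\mathbf{c}^0))$, first such step = stabilization step. Runtime: stochastic scheduler with volume $\varphi=\Theta(n)$, $n=\|\mathbf{c}^0\|_1$; propensity $\pi_{\mathbf{c}}(\alpha)=\mathbf{c}(A)/|\mathcal{R}(\mathbf{r})|$ ($\mathbf{r}=A$), $\frac1\varphi\binom{\mathbf{c}(A)}2/|\mathcal{R}(\mathbf{r})|$ ($\mathbf{r}=2A$), $\frac1\varphi\mathbf{c}(A)\mathbf{c}(B)/|\mathcal{R}(\mathbf{r})|$ ($\mathbf{r}=A+B$); step time span $1/\pi_{\mathbf{c}}(\mathcal{R})$.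 $\tau(\eta,t,Q)$ = least $s>t$ with $\alpha^{s-1}\in Q$ or every reaction of $Q$ inapplicable at some step in $[t,s]$. Runtime policy $\varrho(\mathbf{c})\subseteq\operatorname{NV}(\mathcal{R})$; skipping policy $\sigma(t)\ge t$; rounds $t(0)=0$, $t_e(i)=\sigma(t(i))$, $\mathbf{e}^i=\mathbf{c}^{t_e(i)}$, $t(i+1)=\tau(\eta,t_e(i),\varrho(\mathbf{e}^i))$; $\operatorname{TC}^{\varrho}(\mathbf{c})$ = expected total time span of the steps before $\tau(\eta_r,0,\varrho(\mathbf{c}))$ of a stochastic execution from $\mathbf{c}$; $\operatorname{RT}_{\mathrm{stab}}^{\varrho,\sigma}(\eta)=\sum_{i<i^*}\operatorname{TC}^{\varrho}(\mathbf{e}^i)$, $i^*=\min\{i:t(i)\ge t^*\}$; $\operatorname{RT}_{\mathrm{stab}}^{\Pi}(n)=\min_\varrho\max_{\eta,\sigma}\operatorname{RT}_{\mathrm{stab}}^{\varrho,\sigma}(\eta)$, max over weakly fair valid executions with initial molecular count $n$ and all skipping policies. *)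

From HB Require Import structures.
From mathcomp Require Import all_boot all_order all_algebra.
From mathcomp Require Import all_classical all_reals all_analysis.
From mathcomp Require Import Rstruct.

Set Implicit Arguments.
Unset Strict Implicit.
Unset Printing Implicit Defensive.

Import Order.TTheory GRing.Theory Num.Theory.
Local Open Scope ring_scope.

Section CRN.
Variable S : finType.

Definition config := {ffun S -> nat}.
Definition reaction := (config * config)%type.
Definition dflt_reaction : reaction := ([ffun=> 0%N], [ffun=> 0%N]).

Definition norm1 (c : config) : nat := (\sum_(s : S) c s)%N.
Definition applicable (a : reaction) (c : config) : bool := [forall s, (a.1 s <= c s)%N].
Definition apply_r (a : reaction) (c : config) : config :=
  [ffun s => (c s - a.1 s + a.2 s)%N].
Definition is_void (a : reaction) : bool := a.1 == a.2.
Definition Rof (Rs : seq reaction) (r : config) : seq reaction := [seq a <- Rs | a.1 == r].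
Definition NV (Rs : seq reaction) : seq reaction := [seq a <- Rs | ~~ is_void a].

Inductive reach (Rs : seq reaction) : config -> config -> Prop :=
| reach_refl c : reach Rs c c
| reach_step c a c' : a \in Rs -> applicable a c -> reach Rs (apply_r a c) c' -> reach Rs c c'.

Definition finite_density (Rs : seq reaction) : Prop :=
  exists K : nat, forall c c', (1 <= norm1 c)%N -> reach Rs c c' -> (norm1 c' <= K * norm1 c)%N.

Definition is_crn (Rs : seq reaction) : Prop :=
  [/\ uniq Rs,
      (forall a, a \in Rs -> ((norm1 a.1 == 1) || (norm1 a.1 == 2))%N && (norm1 a.1 <= norm1 a.2)%N),
      (forall r : config, (1 <= norm1 r <= 2)%N -> (exists2 a, a \in Rs & a.1 = r)),
      (forall a, a \in Rs -> is_void a -> forall b, b \in Rs -> b.1 = a.1 -> b = a) &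
      NV Rs != [::]] /\
  finite_density Rs.

Record interface := Interface { U_of : Type; mu_of : config -> U_of; C_of : U_of -> U_of -> Prop }.

Definition Ztarget (I : interface) (c0 c : config) : Prop := C_of (mu_of I c0) (mu_of I c).
Definition valid (I : interface) (c0 : config) : Prop := exists c, (1 <= norm1 c)%N /\ Ztarget I c0 c.
Definition stab (Rs : seq reaction) (Z : config -> Prop) (c : config) : Prop :=
  Z c /\ forall c', reach Rs c c' -> Z c'.

Definition is_exec (Rs : seq reaction) (cs : nat -> config) (al : nat -> reaction) : Prop :=
  (1 <= norm1 (cs 0%N))%N /\
  forall t, [/\ al t \in Rs, applicable (al t) (cs t) & cs t.+1 = apply_r (al t) (cs t)].

Definition weakly_fair (Rs : seq reaction) (cs : nat -> config) (al : nat -> reaction) : Prop :=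
  forall t a, a \in Rs -> applicable a (cs t) ->
    exists2 t', (t <= t')%N & (al t' = a \/ ~~ applicable a (cs t')).

Definition stably_correct (Rs : seq reaction) (I : interface) : Prop :=
  forall cs al, is_exec Rs cs al -> weakly_fair Rs cs al -> valid I (cs 0%N) ->
    exists t, stab Rs (Ztarget I (cs 0%N)) (cs t).

Definition least (P : pred nat) : option nat :=
  match pselect (exists n, P n) with
  | left h => Some (ex_minn h)
  | right _ => None
  end.

Definition tau_stop (Rs : seq reaction) (cs : nat -> config) (al : nat -> reaction)
    (t : nat) (Q : pred reaction) (s : nat) : bool :=
  (t < s)%N &&
  (Q (al s.-1) ||
   [exists u : 'I_s.+1, (t <= u)%N && all (fun a => Q a ==> ~~ applicable a (cs u)) Rs]).

(* tau(eta,t,Q); None = infinity *)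
Definition tau (Rs : seq reaction) cs al (t : nat) (Q : pred reaction) : option nat :=
  least (tau_stop Rs cs al t Q).

Local Notation R := Rdefinitions.R.

(* mass-action propensity with volume v:  c(A)/|R(r)|, (1/v) C(c(A),2)/|R(r)|,
   (1/v) c(A)c(B)/|R(r)|  for r = A, 2A, A+B respectively. *)
Definition propensity (v : R) (Rs : seq reaction) (c : config) (a : reaction) : R :=
  ((\prod_(s : S) 'C(c s, a.1 s))%N)%:R / v ^+ (norm1 a.1).-1 / (size (Rof Rs a.1))%:R.

Definition prop_total (v : R) (Rs : seq reaction) (c : config) : R :=
  \sum_(a <- Rs) propensity v Rs c a.

Fixpoint allseqs (Rs : seq reaction) (t : nat) : seq (seq reaction) :=
  match t with
  | 0%N => [:: [::]]
  | t'.+1 => [seq a :: p | a <- Rs, p <- allseqs Rs t']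
  end.

Definition cfg_at (c : config) (p : seq reaction) (u : nat) : config :=
  foldl (fun c a => apply_r a c) c (take u p).
Definition act_at (p : seq reaction) (u : nat) : reaction := nth dflt_reaction p u.

(* probability that the stochastic execution from c starts with the reactions p *)
Definition path_prob (v : R) Rs (c : config) (p : seq reaction) : R :=
  \prod_(i < size p) (propensity v Rs (cfg_at c p i) (act_at p i) / prop_total v Rs (cfg_at c p i)).

(* step number size p is before tau(eta_r, 0, Q) *)
Definition counted Rs (c : config) (p : seq reaction) (Q : pred reaction) : bool :=
  ~~ [exists s : 'I_(size p).+1, tau_stop Rs (cfg_at c p) (act_at p) 0 Q s].

(* TC^rho(c) with Q = rho(c): expected total time span of the steps before tau(eta_r,0,Q) *)
Definition TC (v : R) Rs (Q : pred reaction) (c : config) : \bar R :=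
  \sum_(0 <= t <oo)
    ((\sum_(p <- allseqs Rs t)
        (if counted Rs c p Q
         then path_prob v Rs c p * (prop_total v Rs (cfg_at c p t))^-1 else 0))%:E).

Definition is_runtime_policy Rs (rho : config -> pred reaction) : Prop :=
  forall c a, rho c a -> a \in NV Rs.
Definition is_skipping_policy (sigma : nat -> nat) : Prop := forall t, (t <= sigma t)%N.

Fixpoint round Rs cs al (sigma : nat -> nat) (rho : config -> pred reaction) (i : nat) : option nat :=
  match i with
  | 0%N => Some 0%N
  | i'.+1 => match round Rs cs al sigma rho i' with
             | Some ti => tau Rs cs al (sigma ti) (rho (cs (sigma ti)))
             | None => None
             end
  end.

Definition stab_step Rs (I : interface) cs : option nat :=
  least (fun t => `[< stab Rs (Ztarget I (cs 0%N)) (cs t) >]).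

Definition RT_exec (v : R) Rs I cs al sigma rho : \bar R :=
  match stab_step Rs I cs with
  | Some ts =>
      match least (fun i => if round Rs cs al sigma rho i is Some ti then (ts <= ti)%N else true) with
      | Some istar =>
          \sum_(i < istar)
             (if round Rs cs al sigma rho i is Some ti
              then TC v Rs (rho (cs (sigma ti))) (cs (sigma ti)) else 0%E)
      | None => +oo%E
      end
  | None => +oo%E
  end.

Definition RT_max (v : R) Rs I rho (n : nat) : \bar R :=
  ereal_sup [set x | exists cs al sigma,
    [/\ is_exec Rs cs al, weakly_fair Rs cs al, valid I (cs 0%N), norm1 (cs 0%N) = n &
        is_skipping_policy sigma] /\ x = RT_exec v Rs I cs al sigma rho].

Definition RT_stab (phi : nat -> R) Rs I (n : nat) : \bar R :=
  ereal_inf [set x | exists rho, is_runtime_policy Rs rho /\ x = RT_max (phi n) Rs I rho n].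

Definition scc Rs (c c' : config) : Prop := reach Rs c c' /\ reach Rs c' c.
Definition escapes Rs (c : config) (a : reaction) : Prop :=
  a \in Rs /\ forall c', scc Rs c c' -> applicable a c' /\ ~ scc Rs c (apply_r a c').

Definition RT_stab_esc (phi : nat -> R) Rs I (n : nat) : \bar R :=
  ereal_inf [set x | exists rho, [/\ is_runtime_policy Rs rho,
      (forall c, (1 <= norm1 c)%N -> forall a, rho c a -> escapes Rs c a)
    & x = RT_max (phi n) Rs I rho n]].

End CRN.

Definition volume_theta (phi : nat -> Rdefinitions.R) : Prop :=
  exists a b : Rdefinitions.R, [/\ 0 < a, 0 < b &
    forall n : nat, (1 <= n)%N -> a * n%:R <= phi n <= b * n%:R].

(* The protocol has species T1, T2, K, D, reactions T1 -> D, T2 -> D, T1 + K -> T2 + K,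
   T2 + K -> T1 + K and 2K -> 2D, and starts from T1 + 2K + (m + 1) D; its task is to remove
   T1 and T2.  It is stably correct because 2K -> 2D eventually fires and freezes the exchange
   between T1 and T2, after which T1 -> D and T2 -> D must fire.

   Watching {T1 -> D, T2 -> D} stabilizes the protocol in a single round of expected length at
   most 1, as one of these reactions has rate at least 1 while T1 or T2 is present.  At the
   initial configuration, however, T1 and T2 are exchanged inside a strongly connected component
   that only 2K -> 2D escapes, at rate 1 / v with v = Theta(n).  A policy watching only escaping
   reactions therefore either waits for it, in expected time about v, or watches nothing there,
   and then an execution idling on void reactions makes it pay a round for every idle step. *)

From HB Require Import structures.
From mathcomp Require Import all_boot all_order all_algebra.
From mathcomp Require Import all_classical all_reals all_analysis.
From mathcomp Require Import Rstruct.
From mathcomp Require Import zify ring lra.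
Import Order.TTheory GRing.Theory Num.Theory.
Local Open Scope ring_scope.

Set Implicit Arguments.
Unset Strict Implicit.
Unset Printing Implicit Defensive.

Local Notation R := Rdefinitions.R.

Variant least_spec (P : pred nat) : option nat -> Prop :=
  | LeastSome m of P m & (forall k, P k -> m <= k)%N : least_spec P (Some m)
  | LeastNone of (forall n, ~~ P n) : least_spec P None.

Lemma leastP (P : pred nat) : least_spec P (least P).
Proof.
rewrite /least; case: pselect => [h|nP]; first by case: ex_minnP => m; constructor.
by constructor=> n; apply/negP => Pn; apply: nP; exists n.
Qed.

Lemma least_eq_Some (P : pred nat) m :
  P m -> (forall k, P k -> m <= k)%N -> least P = Some m.
Proof.
move=> Pm minm; case: leastP => [k Pk mink|/(_ m)]; last by rewrite Pm.
by congr Some; apply/eqP; rewrite eqn_leq minm // mink.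
Qed.

Lemma exists_ordE k (P : pred nat) : [exists i : 'I_k, P i] = has P (iota 0 k).
Proof.
apply/existsP/hasP => [[i Pi]|[i]]; first by exists (val i); rewrite ?mem_iota /= ?ltn_ord.
by rewrite mem_iota => lt_ik Pi; exists (Ordinal lt_ik).
Qed.

Lemma has_iota0S (P : pred nat) n :
  has P (iota 0 n.+1) = P 0%N || has (P \o succn) (iota 0 n).
Proof. by rewrite /= -[1%N]addn0 iotaDl has_map. Qed.

Lemma expr_le_small (r e : R) : 0 <= r < 1 -> 0 < e -> exists T, r ^+ T <= e.
Proof.
move=> /andP[r_ge0 r_lt1] e_gt0.
have r_lt1' : `|r| < 1 by rewrite ger0_norm.
have [T _ HT] := cvgr_lt 0 (cvg_expr r_lt1') e e_gt0.
by exists T; apply/ltW/HT => /=.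
Qed.

(** * Expected duration of a round *)

Section ExpectedRoundTime.
Variables (S : finType) (Rs : seq (reaction S)) (Q : pred (reaction S)) (v : R).

Definition Qdisabled (c : config S) := all (fun a => Q a ==> ~~ applicable a c) Rs.

Definition continues (c : config S) (a : reaction S) :=
  [&& ~~ Qdisabled c, ~~ Q a & ~~ Qdisabled (apply_r a c)].

Lemma cfg_at0 (c : config S) p : cfg_at c p 0 = c.
Proof. by rewrite /cfg_at take0. Qed.

Lemma tau_stop0E (cs : nat -> config S) al s :
  tau_stop Rs cs al 0 Q s = (0 < s)%N && (Q (al s.-1) || has (Qdisabled \o cs) (iota 0 s.+1)).
Proof. by rewrite /tau_stop (exists_ordE _ (fun u => (0 <= u)%N && Qdisabled (cs u))). Qed.

Lemma countedE c p :
  counted Rs c p Q = (p == [::]) ||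
    ~~ (has (Q \o act_at p) (iota 0 (size p)) ||
        has (Qdisabled \o cfg_at c p) (iota 0 (size p).+1)).
Proof.
rewrite /counted (exists_ordE _ (tau_stop Rs (cfg_at c p) (act_at p) 0 Q)).
case: p => [//|a p]; rewrite [a :: p == _]/= orFb [size _]/=; congr negb.
apply/hasP/orP => [[s]|[]/hasP[i]]; rewrite !mem_iota.
- move=> /andP[_ lt_s]; rewrite tau_stop0E => /andP[s_gt0 /orP[Qs|/hasP[u]]].
    by left; apply/hasP; exists s.-1; rewrite ?mem_iota //=; lia.
  by rewrite !mem_iota => lt_u Pu; right; apply/hasP; exists u; rewrite ?mem_iota //=; lia.
- move=> lt_i Qi; exists i.+1; rewrite ?mem_iota ?tau_stop0E; first lia.
  by move: Qi => /= ->.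
move=> lt_i Pi; exists (size p).+1; rewrite ?mem_iota ?tau_stop0E; first lia.
by apply/orP; right; apply/hasP; exists i; rewrite ?mem_iota.
Qed.

Lemma counted_cons c a p :
  counted Rs c (a :: p) Q = continues c a && counted Rs (apply_r a c) p Q.
Proof.
rewrite /continues !countedE [size _]/= [_ :: _ == _]/= orFb.
rewrite (has_iota0S (Q \o _)) (has_iota0S (Qdisabled \o cfg_at c _)).
(* Shifted by one step, the path a :: p from c is, up to conversion, the path p from apply_r a c. *)
rewrite -[(Q \o _) \o succn]/(Q \o act_at p) -[(Q \o _) 0%N]/(Q a).
rewrite -[(Qdisabled \o _) \o succn]/(Qdisabled \o cfg_at (apply_r a c) p).
rewrite -[(Qdisabled \o cfg_at c _) 0%N]/(Qdisabled c).
rewrite (has_iota0S (Qdisabled \o cfg_at (apply_r a c) p)).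
rewrite -[(Qdisabled \o cfg_at _ p) 0%N]/(Qdisabled (cfg_at (apply_r a c) p 0)) cfg_at0.
by case: p => [|b p]; case: (Q a); case: (Qdisabled c); case: (Qdisabled (apply_r a c));
  rewrite /= ?orbT.
Qed.

Lemma path_prob_cons c a p :
  path_prob v Rs c (a :: p) =
  propensity v Rs c a / prop_total v Rs c * path_prob v Rs (apply_r a c) p.
Proof. by rewrite /path_prob /= big_ord_recl. Qed.

Definition TC_term c t := \sum_(p <- allseqs Rs t)
  (if counted Rs c p Q then path_prob v Rs c p / prop_total v Rs (cfg_at c p t) else 0).

Definition TC_partial c T := \sum_(t < T) TC_term c t.

Definition step_weight c a :=
  if continues c a then propensity v Rs c a / prop_total v Rs c else 0.

Lemma TC_term0 c : TC_term c 0 = (prop_total v Rs c)^-1.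
Proof. by rewrite /TC_term /= big_seq1 /path_prob big_ord0 mul1r cfg_at0 countedE. Qed.

Lemma TC_termS c t :
  TC_term c t.+1 = \sum_(a <- Rs) step_weight c a * TC_term (apply_r a c) t.
Proof.
rewrite /TC_term /= big_allpairs_dep; apply: eq_bigr => a _; rewrite /step_weight.
case: ifP => [ca|nca]; last by rewrite mul0r big1 // => p _; rewrite counted_cons nca.
rewrite big_distrr; apply: eq_bigr => p _ /=.
rewrite counted_cons ca path_prob_cons /=.
by case: ifP; rewrite ?mulr0 // mulrA.
Qed.

Lemma TC_partialS c T : TC_partial c T.+1 =
  (prop_total v Rs c)^-1 + \sum_(a <- Rs) step_weight c a * TC_partial (apply_r a c) T.
Proof.
rewrite /TC_partial big_ord_recl TC_term0; congr (_ + _).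
under eq_bigr do rewrite TC_termS.
by rewrite exchange_big /=; apply: eq_bigr => a _; rewrite mulr_sumr.
Qed.

Lemma TCE c : TC v Rs Q c = (\sum_(0 <= t <oo) (TC_term c t)%:E)%E.
Proof. by []. Qed.

Definition propQ c := \sum_(a <- Rs | Q a) propensity v Rs c a.

Lemma prop_total_split c :
  prop_total v Rs c = propQ c + \sum_(a <- Rs | ~~ Q a) propensity v Rs c a.
Proof. exact: bigID. Qed.

Hypothesis v_ge0 : 0 <= v.

Lemma propensity_ge0 c a : 0 <= propensity v Rs c a.
Proof. by rewrite /propensity !divr_ge0 // exprn_ge0. Qed.

Lemma prop_total_ge0 c : 0 <= prop_total v Rs c.
Proof. by rewrite sumr_ge0 // => a _; apply: propensity_ge0. Qed.

Lemma propensity_le_total c a : a \in Rs -> propensity v Rs c a <= prop_total v Rs c.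
Proof.
move=> Rs_a; rewrite /prop_total (big_rem a) //= lerDl.
by rewrite sumr_ge0 // => b _; apply: propensity_ge0.
Qed.

Lemma propensity_le_propQ c a : a \in Rs -> Q a -> propensity v Rs c a <= propQ c.
Proof.
move=> Rs_a Qa; rewrite /propQ (big_rem a) //= Qa lerDl.
by rewrite sumr_ge0 // => b _; apply: propensity_ge0.
Qed.

Lemma propensity_gt0_applicable c a : 0 < propensity v Rs c a -> applicable a c.
Proof.
apply: contraTT => /forallPn[s]; rewrite -ltnNge => lt_cs.
by rewrite /propensity (bigD1 s) //= bin_small // mul0n !mul0r ltxx.
Qed.

Lemma step_weight_ge0 c a : 0 <= step_weight c a.
Proof.
by rewrite /step_weight; case: ifP => // _; rewrite divr_ge0 ?propensity_ge0 ?prop_total_ge0.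
Qed.

Lemma TC_term_ge0 t c : 0 <= TC_term c t.
Proof.
elim: t c => [|t IH] c; first by rewrite TC_term0 invr_ge0 prop_total_ge0.
by rewrite TC_termS sumr_ge0 // => a _; rewrite mulr_ge0 ?step_weight_ge0.
Qed.

Lemma TC_partial_ge0 T c : 0 <= TC_partial c T.
Proof. by rewrite sumr_ge0 // => t _; apply: TC_term_ge0. Qed.

Lemma TC_partial_le_TC T c : ((TC_partial c T)%:E <= TC v Rs Q c)%E.
Proof.
rewrite TCE; apply: le_trans (nneseries_lim_ge T _); last first.
  by move=> t _ _; rewrite lee_fin TC_term_ge0.
by rewrite -sumEFin big_mkord.
Qed.

Lemma inv_prop_total_le_TC c : (((prop_total v Rs c)^-1)%:E <= TC v Rs Q c)%E.
Proof. by have := TC_partial_le_TC 1 c; rewrite /TC_partial big_ord1 TC_term0. Qed.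

Lemma TC_le M c : (forall T, TC_partial c T <= M) -> (TC v Rs Q c <= M%:E)%E.
Proof.
move=> HM; rewrite TCE; apply: lime_le.
  by apply: is_cvg_nneseries => t _ _; rewrite lee_fin TC_term_ge0.
by apply: nearW => T; rewrite sumEFin lee_fin big_mkord; apply: HM.
Qed.

Lemma TC_partial_Qdisabled T c : Qdisabled c -> TC_partial c T <= (prop_total v Rs c)^-1.
Proof.
case: T => [|T] Qc; first by rewrite /TC_partial big_ord0 invr_ge0 prop_total_ge0.
rewrite TC_partialS big1 ?addr0 // => a _.
by rewrite /step_weight /continues Qc mul0r.
Qed.

(* While some reaction of Q is applicable, a reaction of Q fires with probability at least
   lam / Pi per step, so the round lasts at most 1 / lam in expectation. *)
Lemma TC_partial_le_inv (lam : R) : 0 < lam ->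
  (forall c, ~~ Qdisabled c -> lam <= propQ c) ->
  forall T c, ~~ Qdisabled c -> TC_partial c T <= lam^-1.
Proof.
move=> lam_gt0 lam_le; elim=> [|T IH] c Qc.
  by rewrite /TC_partial big_ord0 invr_ge0 ltW.
set Pi := prop_total v Rs c; set r := \sum_(a <- Rs | ~~ Q a) propensity v Rs c a.
have Pi_eq : Pi = propQ c + r by rewrite /Pi prop_total_split.
have r_ge0 : 0 <= r by rewrite sumr_ge0 // => a _; apply: propensity_ge0.
have lam_Q := lam_le c Qc.
have Pi_gt0 : 0 < Pi by lra.
have weight_ge0 a : 0 <= propensity v Rs c a / Pi.
  by apply: divr_ge0 (propensity_ge0 _ _) (ltW Pi_gt0).
have step : \sum_(a <- Rs) step_weight c a * TC_partial (apply_r a c) T <= r / Pi * lam^-1.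
  rewrite /r !mulr_suml [X in _ <= X]big_mkcond /=; apply: ler_sum => a _.
  rewrite /step_weight; case: ifP => [/and3P[_ -> Qac]|_].
    by rewrite ler_wpM2l ?IH //; apply: weight_ge0.
  by rewrite mul0r; case: ifP => // _; apply: divr_ge0 (weight_ge0 a) (ltW lam_gt0).
rewrite TC_partialS; apply: le_trans (lerD (lexx _) step) _.
have -> : Pi^-1 + r / Pi * lam^-1 = (lam + r) / (Pi * lam).
  by field; rewrite !gt_eqF.
by rewrite ler_pdivrMr ?mulr_gt0 // mulrCA mulVf ?gt_eqF // mulr1; lra.
Qed.

(* Each step lasts at least 1 / B in expectation and, as long as the configuration stays in P,
   the round survives it with probability at least 1 - lam / Pi: the recursion for TC_partial
   then dominates a truncated geometric series. *)
Lemma TC_partial_ge (P : config S -> Prop) (lam B : R) : 0 < lam -> lam <= B ->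
  (forall c, P c ->
     [/\ ~~ Qdisabled c, 0 < prop_total v Rs c, prop_total v Rs c <= B & propQ c <= lam]) ->
  (forall c a, P c -> a \in Rs -> ~~ Q a -> 0 < propensity v Rs c a -> P (apply_r a c)) ->
  forall T c, P c -> lam^-1 * (1 - (1 - lam / B) ^+ T) <= TC_partial c T.
Proof.
move=> lam_gt0 lam_le_B HP P_step.
have B_gt0 : 0 < B by apply: lt_le_trans lam_le_B.
have rho_ge0 : 0 <= 1 - lam / B by rewrite subr_ge0 ler_pdivrMr // mul1r.
have rho_le1 : 1 - lam / B <= 1 by rewrite lerBlDr lerDl divr_ge0 // ltW.
elim=> [|T IH] c Pc; first by rewrite expr0 subrr mulr0 /TC_partial big_ord0.
have [Qc Pi_gt0 Pi_le_B Q_le] := HP c Pc.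
set Pi := prop_total v Rs c; set rest := \sum_(a <- Rs | ~~ Q a) propensity v Rs c a.
have rest_ge : Pi - lam <= rest by have := prop_total_split c; rewrite -/Pi -/rest; lra.
set x := (1 - lam / B) ^+ T.
have x01 : 0 <= x <= 1 by rewrite exprn_ge0 // exprn_ile1.
set L := lam^-1 * (1 - x).
have L_ge0 : 0 <= L.
  by case/andP: x01 => _ x_le1; rewrite mulr_ge0 ?subr_ge0 ?invr_ge0 ?(ltW lam_gt0).
have step : rest / Pi * L <= \sum_(a <- Rs) step_weight c a * TC_partial (apply_r a c) T.
  rewrite /rest !mulr_suml big_mkcond big_seq [X in _ <= X]big_seq /=.
  apply: ler_sum => a Rs_a; case: ifP => [Qa|_]; last first.
    by rewrite mulr_ge0 ?step_weight_ge0 ?TC_partial_ge0.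
  have := propensity_ge0 c a; rewrite le0r => /orP[/eqP->|prop_gt0].
    by rewrite !mul0r mulr_ge0 ?step_weight_ge0 ?TC_partial_ge0.
  have Pac := P_step c a Pc Rs_a Qa prop_gt0.
  have [Qac _ _ _] := HP _ Pac.
  rewrite /step_weight /continues Qc Qa Qac /= -/Pi ler_wpM2l ?IH //.
  exact: divr_ge0 (propensity_ge0 _ _) (ltW Pi_gt0).
rewrite TC_partialS exprSr -/x; apply: le_trans (lerD (lexx _) step).
have first_steps : (Pi - lam) / Pi * L <= rest / Pi * L.
  by rewrite ler_wpM2r // ler_wpM2r // invr_ge0 ltW.
have Pi_inv : x / B <= x / Pi by rewrite ler_wpM2l ?lef_pV2 ?posrE //; case/andP: x01.
have -> : lam^-1 * (1 - x * (1 - lam / B)) = L + x / B by rewrite /L; field; rewrite !gt_eqF.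
have : Pi^-1 + (Pi - lam) / Pi * L = L + x / Pi by rewrite /L; field; rewrite !gt_eqF.
lra.
Qed.

End ExpectedRoundTime.

(** * Weakly fair executions and rounds *)

Section Executions.
Variables (S : finType) (Rs : seq (reaction S)) (cs : nat -> config S) (al : nat -> reaction S).
Hypothesis exec : is_exec Rs cs al.

Lemma exec_closed (P : config S -> Prop) :
  (forall a c, a \in Rs -> applicable a c -> P c -> P (apply_r a c)) ->
  forall t0, P (cs t0) -> forall t, (t0 <= t)%N -> P (cs t).
Proof.
case: exec => _ step P_step t0 P0; elim=> [|t IH]; first by rewrite leqn0 => /eqP <-.
rewrite leq_eqVlt => /orP[/eqP <- //|lt_t0t].
by have [Rs_al app ->] := step t; apply: P_step => //; apply: IH.
Qed.

Lemma fair_eventually_zero (P : config S -> Prop) (s : S) (a : reaction S) t :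
  weakly_fair Rs cs al -> a \in Rs ->
  (forall b c, b \in Rs -> applicable b c -> P c -> P (apply_r b c)) ->
  (forall c, P c -> ~~ applicable a c -> c s = 0%N) ->
  (forall c, P c -> applicable a c -> apply_r a c s = 0%N) ->
  P (cs t) -> exists t', P (cs t') /\ cs t' s = 0%N.
Proof.
move=> fair Rs_a P_step Pn0 Pa0 Pt.
have P_after := exec_closed P_step Pt.
case: (boolP (applicable a (cs t))) => [app|napp]; last by exists t; split; last exact: Pn0.
have [t' le_tt' [fire|napp']] := fair t a Rs_a app; last first.
  by exists t'; split; [apply: P_after | apply: Pn0 => //; apply: P_after].
have [_ app' next] := exec.2 t'.
exists t'.+1; split; first exact: P_after (leqW le_tt').
by rewrite next fire; apply: Pa0; [apply: P_after | rewrite -fire].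
Qed.

End Executions.

Lemma tau_idle (S : finType) (Rs : seq (reaction S)) cs al t Q :
  (forall a, a \in Rs -> ~~ Q a) -> tau Rs cs al t Q = Some t.+1.
Proof.
move=> noQ; apply: least_eq_Some => [|s /andP[//]].
rewrite /tau_stop ltnSn; apply/orP; right; apply/existsP; exists (Ordinal (leqnSn t.+1)).
by rewrite leqnn; apply/allP => a /noQ /negbTE->.
Qed.

Lemma round_idle (S : finType) (Rs : seq (reaction S)) cs al rho i :
  (forall j a, (j < i)%N -> a \in Rs -> ~~ rho (cs j) a) -> round Rs cs al id rho i = Some i.
Proof.
elim: i => [//|i IH] idle /=; rewrite IH => [|j a lt_ji]; last by apply: idle; lia.
by apply: tau_idle => a; apply: idle.
Qed.

(** * The protocol *)

Inductive species := T1 | T2 | K | D.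

Definition species_nat (s : species) : nat :=
  match s with T1 => 0 | T2 => 1 | K => 2 | D => 3 end.
Definition nat_species (n : nat) : species :=
  match n with 0 => T1 | 1 => T2 | 2 => K | _ => D end.
Lemma species_natK : cancel species_nat nat_species. Proof. by case. Qed.
HB.instance Definition _ := Countable.copy species (can_type species_natK).
Lemma species_enumP : finite_axiom [:: T1; T2; K; D]. Proof. by case. Qed.
HB.instance Definition _ := fintype.isFinite.Build species species_enumP.

Definition conf (t1 t2 k d : nat) : config species :=
  [ffun s => match s with T1 => t1 | T2 => t2 | K => k | D => d end].

Lemma conf_T1 t1 t2 k d : conf t1 t2 k d T1 = t1. Proof. by rewrite ffunE. Qed.
Lemma conf_T2 t1 t2 k d : conf t1 t2 k d T2 = t2. Proof. by rewrite ffunE. Qed.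
Lemma conf_K t1 t2 k d : conf t1 t2 k d K = k. Proof. by rewrite ffunE. Qed.
Lemma conf_D t1 t2 k d : conf t1 t2 k d D = d. Proof. by rewrite ffunE. Qed.
Definition confE := (conf_T1, conf_T2, conf_K, conf_D).

Lemma conf_eta (c : config species) : c = conf (c T1) (c T2) (c K) (c D).
Proof. by apply/ffunP => -[]; rewrite confE. Qed.

Lemma big_species (idx : nat) (op : Monoid.com_law idx) (F : species -> nat) :
  \big[op/idx]_s F s = op (op (op (F T1) (F T2)) (F K)) (F D).
Proof.
rewrite (bigD1 T1) // (bigD1 T2) // (bigD1 K) // (bigD1 D) // big1 => [|[]] //.
by rewrite Monoid.mulm1 !Monoid.mulmA.
Qed.

Lemma norm1E (c : config species) : norm1 c = (c T1 + c T2 + c K + c D)%N.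
Proof. exact: big_species. Qed.

Lemma applicableE (a : reaction species) c : applicable a c =
  [&& a.1 T1 <= c T1, a.1 T2 <= c T2, a.1 K <= c K & a.1 D <= c D]%N.
Proof. by apply/forallP/and4P => [app|[? ? ? ?] []]; rewrite ?app. Qed.

Lemma apply_rE (a : reaction species) c : apply_r a c =
  conf (c T1 - a.1 T1 + a.2 T1) (c T2 - a.1 T2 + a.2 T2)
       (c K - a.1 K + a.2 K) (c D - a.1 D + a.2 D).
Proof. by apply/ffunP => -[]; rewrite !ffunE. Qed.

Definition T1_to_D : reaction species := (conf 1 0 0 0, conf 0 0 0 1).
Definition T2_to_D : reaction species := (conf 0 1 0 0, conf 0 0 0 1).
Definition T1_to_T2 : reaction species := (conf 1 0 1 0, conf 0 1 1 0).
Definition T2_to_T1 : reaction species := (conf 0 1 1 0, conf 1 0 1 0).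
Definition KK_to_DD : reaction species := (conf 0 0 2 0, conf 0 0 0 2).
Definition void_reaction (r : config species) : reaction species := (r, r).
Notation void_D := (void_reaction (conf 0 0 0 1)).
Notation void_DD := (void_reaction (conf 0 0 0 2)).

(* The model requires a reaction for every reactant vector of size 1 or 2; the protocol has no
   use for the remaining ones, which are given void reactions. *)
Definition crn : seq (reaction species) :=
  [:: T1_to_D; T2_to_D; T1_to_T2; T2_to_T1; KK_to_DD;
      void_reaction (conf 0 0 1 0); void_D; void_reaction (conf 2 0 0 0);
      void_reaction (conf 1 1 0 0); void_reaction (conf 1 0 0 1); void_reaction (conf 0 2 0 0);
      void_reaction (conf 0 1 0 1); void_reaction (conf 0 0 1 1); void_DD].

Lemma apply_void_reaction (r c : config species) :
  applicable (void_reaction r) c -> apply_r (void_reaction r) c = c.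
Proof. by move=> /forallP le_rc; apply/ffunP => s; rewrite ffunE subnK. Qed.

Lemma crn_ind (P : reaction species -> Prop) :
  P T1_to_D -> P T2_to_D -> P T1_to_T2 -> P T2_to_T1 -> P KK_to_DD ->
  (forall r, P (void_reaction r)) -> forall a, a \in crn -> P a.
Proof.
move=> ? ? ? ? ? Pv a; rewrite !inE.
by repeat (case/orP; [move/eqP->; first [assumption | apply: Pv] |]); move/eqP->.
Qed.

Lemma T1_to_D_in : T1_to_D \in crn. Proof. by rewrite !inE eqxx. Qed.
Lemma T2_to_D_in : T2_to_D \in crn. Proof. by rewrite !inE eqxx ?orbT. Qed.
Lemma T1_to_T2_in : T1_to_T2 \in crn. Proof. by rewrite !inE eqxx ?orbT. Qed.
Lemma T2_to_T1_in : T2_to_T1 \in crn. Proof. by rewrite !inE eqxx ?orbT. Qed.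
Lemma KK_to_DD_in : KK_to_DD \in crn. Proof. by rewrite !inE eqxx ?orbT. Qed.
Lemma void_D_in : void_D \in crn. Proof. by rewrite !inE eqxx ?orbT. Qed.
Lemma void_DD_in : void_DD \in crn. Proof. by rewrite !inE eqxx ?orbT. Qed.

Lemma uniq_reactants : uniq (map fst crn).
Proof.
apply: (@map_uniq _ _ (fun r : config species => (r T1, r T2, r K, r D))).
by rewrite /= !confE.
Qed.

Lemma size_Rof a : a \in crn -> size (Rof crn a.1) = 1%N.
Proof.
move=> Rs_a; rewrite size_filter -(count_map fst (pred1 a.1)).
by rewrite count_uniq_mem ?uniq_reactants ?map_f.
Qed.

Lemma crn_reactant_inj a b : a \in crn -> b \in crn -> a.1 = b.1 -> a = b.
Proof.
move=> Rs_a Rs_b eq_ab.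
have : a \in Rof crn a.1 /\ b \in Rof crn a.1 by rewrite !mem_filter eq_ab eqxx Rs_a Rs_b.
case: (Rof crn a.1) (size_Rof Rs_a) => [|x [|//]] // _ [].
by rewrite !inE => /eqP-> /eqP->.
Qed.

Lemma reactant_in_crn r : (1 <= norm1 r <= 2)%N -> r \in map fst crn.
Proof.
move=> bounds; rewrite (conf_eta r); move: bounds; rewrite norm1E.
case: (r T1) => [|[|[|?]]]; case: (r T2) => [|[|[|?]]]; case: (r K) => [|[|[|?]]];
  case: (r D) => [|[|[|?]]] => //= bounds; try lia; by rewrite !inE eqxx ?orbT.
Qed.

Lemma uniq_crn : uniq crn.
Proof. exact: map_uniq uniq_reactants. Qed.

Lemma propensity_crn v c a : a \in crn ->
  propensity v crn c a = (\prod_s 'C(c s, a.1 s))%:R / v ^+ (norm1 a.1).-1.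
Proof. by move=> Rs_a; rewrite /propensity size_Rof // divr1. Qed.

Lemma propensity_T1_to_D v c : propensity v crn c T1_to_D = (c T1)%:R.
Proof.
by rewrite propensity_crn ?T1_to_D_in // big_species norm1E /= !confE bin1 !bin0 !muln1 divr1.
Qed.

Lemma propensity_T2_to_D v c : propensity v crn c T2_to_D = (c T2)%:R.
Proof.
by rewrite propensity_crn ?T2_to_D_in // big_species norm1E /= !confE bin1 !bin0 ?muln1 ?mul1n divr1.
Qed.

Lemma propensity_void_D v c : propensity v crn c (void_D) = (c D)%:R.
Proof.
by rewrite propensity_crn ?void_D_in // big_species norm1E /= !confE bin1 !bin0 !mul1n divr1.
Qed.

Lemma propensity_KK_to_DD v c : propensity v crn c KK_to_DD = 'C(c K, 2)%:R / v.
Proof.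
by rewrite propensity_crn ?KK_to_DD_in // big_species norm1E /= !confE !bin0 muln1 !mul1n expr1.
Qed.

Variant step_spec (c : config species) : reaction species -> config species -> Prop :=
  | StepVoid r : step_spec c (void_reaction r) c
  | StepT1D of (0 < c T1)%N :
      step_spec c T1_to_D (conf (c T1).-1 (c T2) (c K) (c D).+1)
  | StepT2D of (0 < c T2)%N :
      step_spec c T2_to_D (conf (c T1) (c T2).-1 (c K) (c D).+1)
  | StepT1T2 of (0 < c T1)%N & (0 < c K)%N :
      step_spec c T1_to_T2 (conf (c T1).-1 (c T2).+1 (c K) (c D))
  | StepT2T1 of (0 < c T2)%N & (0 < c K)%N :
      step_spec c T2_to_T1 (conf (c T1).+1 (c T2).-1 (c K) (c D))
  | StepKKDD of (1 < c K)%N :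
      step_spec c KK_to_DD (conf (c T1) (c T2) (c K - 2) (c D + 2)).

Lemma stepP a c : a \in crn -> applicable a c -> step_spec c a (apply_r a c).
Proof.
move: a; apply: crn_ind => [||||| r] app.
all: rewrite apply_rE /=; move: app; rewrite applicableE /= ?confE => /and4P[? ? ? ?].
- by rewrite !subn0 !addn0 subn1 addn1; constructor.
- by rewrite !subn0 !addn0 subn1 addn1; constructor.
- by rewrite subnK // !subn0 !addn0 subn1 addn1; constructor.
- by rewrite subnK // !subn0 !addn0 subn1 addn1; constructor.
- by rewrite !subn0 !addn0; constructor.
- by rewrite !subnK // -conf_eta; constructor.
Qed.

Lemma norm1_step a c : a \in crn -> applicable a c -> norm1 (apply_r a c) = norm1 c.
Proof. by move=> Rs_a /(stepP Rs_a) []; rewrite ?norm1E ?confE //; lia. Qed.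

Lemma norm1_reach c c' : reach crn c c' -> norm1 c' = norm1 c.
Proof. by elim=> // {}c a {}c' Rs_a app _ ->; apply: norm1_step. Qed.

Lemma T1_to_D_NV : T1_to_D \in NV crn.
Proof.
by rewrite mem_filter T1_to_D_in andbT /is_void; apply/eqP => /ffunP/(_ T1); rewrite !confE.
Qed.

Lemma T2_to_D_NV : T2_to_D \in NV crn.
Proof.
by rewrite mem_filter T2_to_D_in andbT /is_void; apply/eqP => /ffunP/(_ T2); rewrite !confE.
Qed.

Lemma is_crn_crn : is_crn crn.
Proof.
split; last by exists 1%N => c c' _ /norm1_reach->; rewrite mul1n.
split.
- exact: uniq_crn.
- by apply/allP; rewrite /= !norm1E !confE.
- by move=> r /reactant_in_crn /mapP[a Rs_a ->]; exists a.
- by move=> a Rs_a _ b Rs_b; apply: crn_reactant_inj.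
- by apply: contraTneq T1_to_D_NV => ->.
Qed.

Lemma applicable_T1_to_D c : applicable T1_to_D c = (0 < c T1)%N.
Proof. by rewrite applicableE /= !confE !leq0n !andbT. Qed.

Lemma applicable_T2_to_D c : applicable T2_to_D c = (0 < c T2)%N.
Proof. by rewrite applicableE /= !confE !leq0n /= andbT. Qed.

Lemma applicable_KK_to_DD c : applicable KK_to_DD c = (1 < c K)%N.
Proof. by rewrite applicableE /= !confE !leq0n /= andbT. Qed.

Lemma apply_T1_to_D c : apply_r T1_to_D c = conf (c T1 - 1) (c T2) (c K) (c D + 1).
Proof. by rewrite apply_rE /= !confE !subn0 !addn0. Qed.

Lemma apply_T2_to_D c : apply_r T2_to_D c = conf (c T1) (c T2 - 1) (c K) (c D + 1).
Proof. by rewrite apply_rE /= !confE !subn0 !addn0. Qed.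

Lemma apply_KK_to_DD c : apply_r KK_to_DD c = conf (c T1) (c T2) (c K - 2) (c D + 2).
Proof. by rewrite apply_rE /= !confE !subn0 !addn0. Qed.

(** * Stable correctness *)

Definition initial (c0 : config species) := exists m, c0 = conf 1 0 2 m.+1.
Definition T_free (c : config species) := c T1 = 0%N /\ c T2 = 0%N.

Definition drain : interface species :=
  @Interface species (config species) id (fun c0 c => initial c0 /\ T_free c).

Definition drain_invariant (c : config species) :=
  [/\ (c T1 + c T2 <= 1)%N, (0 < c D)%N & c K = 0%N \/ c K = 2%N].

Lemma drain_invariant_step a c :
  a \in crn -> applicable a c -> drain_invariant c -> drain_invariant (apply_r a c).
Proof.
move=> Rs_a app [? ? ?].
by case: (stepP Rs_a app) => *; rewrite /drain_invariant ?confE; split; lia.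
Qed.

Lemma K0_step a c : a \in crn -> applicable a c -> c K = 0%N ->
  [/\ apply_r a c K = 0%N, (apply_r a c T1 <= c T1)%N & (apply_r a c T2 <= c T2)%N].
Proof. by move=> Rs_a app ?; case: (stepP Rs_a app) => *; rewrite ?confE; split; lia. Qed.

Lemma T_free_step a c : a \in crn -> applicable a c -> T_free c -> T_free (apply_r a c).
Proof. by move=> Rs_a app [? ?]; case: (stepP Rs_a app) => *; rewrite /T_free ?confE; lia. Qed.

Lemma stab_drainP c0 c : initial c0 -> (stab crn (Ztarget drain c0) c <-> T_free c).
Proof.
move=> init; split=> [[[]] //|free]; split=> // c' reach_c'; split=> //.
by elim: reach_c' free => // {}c a {}c' Rs_a app _ IH /(T_free_step Rs_a app).
Qed.

Section DrainingExecution.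
Variables (cs : nat -> config species) (al : nat -> reaction species).
Hypotheses (exec : is_exec crn cs al) (fair : weakly_fair crn cs al) (init : initial (cs 0%N)).

Lemma exec_drain_invariant t : drain_invariant (cs t).
Proof.
apply: (exec_closed exec drain_invariant_step (t0 := 0)) => //.
by case: init => m ->; rewrite /drain_invariant !confE; split; lia.
Qed.

(* KK_to_DD, then T1_to_D, then T2_to_D is each eventually fired or disabled; as K = 0 freezes
   the exchange between T1 and T2, their counts then reach 0 one after the other. *)
Lemma exec_T_free : exists t, T_free (cs t).
Proof.
have [t0 [inv0 K0]] : exists t, drain_invariant (cs t) /\ cs t K = 0%N.
  apply: (fair_eventually_zero exec fair KK_to_DD_in drain_invariant_step _ _
                                (exec_drain_invariant 0)).
    by move=> c [_ _ ?]; rewrite applicable_KK_to_DD; lia.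
  by move=> c [_ _ ?]; rewrite applicable_KK_to_DD apply_KK_to_DD confE; lia.
pose P1 c := drain_invariant c /\ c K = 0%N.
have P1_step a c : a \in crn -> applicable a c -> P1 c -> P1 (apply_r a c).
  by move=> Rs_a app [inv kc]; split; [apply: drain_invariant_step | case: (K0_step Rs_a app kc)].
have [t1 [[inv1 K1] T1_0]] : exists t, P1 (cs t) /\ cs t T1 = 0%N.
  apply: (fair_eventually_zero exec fair T1_to_D_in P1_step _ _ (conj inv0 K0)).
    by move=> c _; rewrite applicable_T1_to_D; lia.
  by move=> c [[? _ _] _]; rewrite applicable_T1_to_D apply_T1_to_D confE; lia.
pose P2 c := [/\ drain_invariant c, c K = 0%N & c T1 = 0%N].
have P2_step a c : a \in crn -> applicable a c -> P2 c -> P2 (apply_r a c).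
  move=> Rs_a app [inv kc tc]; have [? ? _] := K0_step Rs_a app kc.
  by split; [apply: drain_invariant_step | | lia].
have [t2 [[_ _ T1_0'] T2_0]] : exists t, P2 (cs t) /\ cs t T2 = 0%N.
  apply: (fair_eventually_zero exec fair T2_to_D_in P2_step _ _ (And3 inv1 K1 T1_0)).
    by move=> c _; rewrite applicable_T2_to_D; lia.
  by move=> c [[? _ _] _ _]; rewrite applicable_T2_to_D apply_T2_to_D confE; lia.
by exists t2.
Qed.

End DrainingExecution.

Lemma stably_correct_drain : stably_correct crn drain.
Proof.
move=> cs al exec fair [c [_ [init _]]].
have [t free] := exec_T_free exec fair init.
by exists t; apply/(stab_drainP _ init).
Qed.

(** * Upper bound: the drain policy *)

Definition drainQ : pred (reaction species) := [pred a | (a == T1_to_D) || (a == T2_to_D)].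
Definition drain_policy : config species -> pred (reaction species) := fun=> drainQ.

Lemma drain_policy_runtime : is_runtime_policy crn drain_policy.
Proof. by move=> c a /orP[]/eqP->; [apply: T1_to_D_NV | apply: T2_to_D_NV]. Qed.

Lemma Qdisabled_drain c : Qdisabled crn drainQ c -> T_free c.
Proof.
move=> /allP dis; have := dis _ T1_to_D_in; have := dis _ T2_to_D_in.
by rewrite /drainQ /= !eqxx orbT /= applicable_T1_to_D applicable_T2_to_D /T_free; lia.
Qed.

Lemma drainQ_step_T_free a c :
  drain_invariant c -> drainQ a -> applicable a c -> T_free (apply_r a c).
Proof.
move=> [? _ _] /orP[]/eqP->.
  by rewrite applicable_T1_to_D apply_T1_to_D /T_free !confE; lia.
by rewrite applicable_T2_to_D apply_T2_to_D /T_free !confE; lia.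
Qed.

(* While T1 or T2 is present, T1_to_D or T2_to_D fires at rate at least 1. *)
Lemma TC_drain_le1 v (c : config species) : 0 < v -> (0 < c D)%N -> (TC v crn drainQ c <= 1%:E)%E.
Proof.
move=> v_gt0 cD; have v_ge0 := ltW v_gt0; apply: TC_le => // T.
case: (boolP (Qdisabled crn drainQ c)) => [dis|ndis].
  apply: le_trans (TC_partial_Qdisabled v_ge0 _ dis) _.
  have : 1 <= prop_total v crn c.
    by apply: le_trans (propensity_le_total v_ge0 _ void_D_in); rewrite // propensity_void_D ler1n.
  by move=> Pi_ge1; rewrite invf_le1 //; lra.
rewrite -[1]invr1; apply: (TC_partial_le_inv v_ge0 ltr01) => // c' /allPn[a Rs_a].
rewrite negb_imply negbK => /andP[Qa app].
apply: le_trans (propensity_le_propQ v_ge0 _ Rs_a Qa).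
move: Qa app => /orP[]/eqP->.
  by rewrite applicable_T1_to_D propensity_T1_to_D ler1n.
by rewrite applicable_T2_to_D propensity_T2_to_D ler1n.
Qed.

Lemma tau_stop_drain_T_free cs al t0 t1 : is_exec crn cs al -> (forall t, drain_invariant (cs t)) ->
  tau_stop crn cs al t0 drainQ t1 -> exists2 u, (u <= t1)%N & T_free (cs u).
Proof.
move=> [_ step] inv /andP[lt_t01 /orP[Qa|/existsP[u /andP[_ dis]]]].
  exists t1 => //; have -> : t1 = t1.-1.+1 by rewrite prednK //; apply: leq_ltn_trans lt_t01.
  by have [_ app ->] := step t1.-1; apply: drainQ_step_T_free.
by exists u; [rewrite -ltnS | apply: Qdisabled_drain].
Qed.

(* Every round of the drain policy ends with T1 and T2 exhausted, so one round suffices. *)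
Lemma RT_exec_drain_le1 v cs al sigma : 0 < v -> is_exec crn cs al -> weakly_fair crn cs al ->
  initial (cs 0%N) -> (RT_exec v crn drain cs al sigma drain_policy <= 1%:E)%E.
Proof.
move=> v_gt0 exec fair init; have inv := exec_drain_invariant exec init.
rewrite /RT_exec /stab_step; case: leastP => [ts _ min_ts|no_stab]; last first.
  have [t free] := exec_T_free exec fair init.
  by move: (no_stab t) => /asboolPn[]; apply/stab_drainP.
have first_round :
    is_true (if round crn cs al sigma drain_policy 1 is Some t1 then ts <= t1 else true)%N.
  rewrite /=; case E: tau => [t1|] //; move: E; rewrite /tau.
  case: leastP => // s stop _ [<-].
  have [u le_u free] := tau_stop_drain_T_free exec inv stop.
  by apply: leq_trans le_u; apply: min_ts; apply/asboolP/stab_drainP.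
case: leastP => [istar _ min_i|/(_ 1%N)]; last by rewrite first_round.
case: istar {min_i} (min_i 1%N first_round) => [|[|//]] _; first by rewrite big_ord0 lee_fin.
by rewrite big_ord1 /=; apply: TC_drain_le1 => //; case: (inv (sigma 0%N)).
Qed.

Lemma RT_stab_drain_le1 phi n : 0 < phi n -> (RT_stab phi crn drain n <= 1%:E)%E.
Proof.
move=> phi_gt0; apply: ge_ereal_inf; exists (RT_max (phi n) crn drain drain_policy n).
  by exists drain_policy; split => //; apply: drain_policy_runtime.
apply: ge_ereal_sup => _ [cs [al [sigma [[exec fair [c [_ [init _]]] _ _] ->]]]].
exact: RT_exec_drain_le1.
Qed.

(** * Lower bound for policies restricted to escaping reactions *)

Section LazyExecution.
Variable m : nat.

Definition c_start := conf 1 0 2 m.+1.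
Definition c_swapped := conf 0 1 2 m.+1.
Definition c_drained := conf 0 0 2 m.+2.
Definition c_final := conf 0 0 0 m.+4.

Lemma apply_T1_to_T2_start : apply_r T1_to_T2 c_start = c_swapped.
Proof. by rewrite apply_rE /= !confE; congr conf; lia. Qed.

Lemma scc_start_swapped : scc crn c_start c_swapped.
Proof.
have T2T1 : apply_r T2_to_T1 c_swapped = c_start by rewrite apply_rE /= !confE; congr conf; lia.
split.
  apply: (reach_step T1_to_T2_in); rewrite ?apply_T1_to_T2_start ?applicableE /= ?confE //.
  exact: reach_refl.
by apply: (reach_step T2_to_T1_in); rewrite ?T2T1 ?applicableE /= ?confE //; apply: reach_refl.
Qed.

Lemma escapes_start a : a \in NV crn -> escapes crn c_start a -> a = KK_to_DD.
Proof.
have scc_refl : scc crn c_start c_start by split; apply: reach_refl.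
rewrite mem_filter => /andP[nvoid Rs_a]; move: a Rs_a nvoid; apply: crn_ind => //.
- by move=> _ [_ /(_ _ scc_start_swapped)[]]; rewrite applicable_T1_to_D /c_swapped confE.
- by move=> _ [_ /(_ _ scc_refl)[]]; rewrite applicable_T2_to_D /c_start confE.
- move=> _ [_ /(_ _ scc_refl)[_ []]].
  by rewrite apply_T1_to_T2_start; apply: scc_start_swapped.
- by move=> _ [_ /(_ _ scc_refl)[]]; rewrite applicableE /= !confE.
- by move=> r; rewrite /is_void eqxx.
Qed.

(* The execution idles at c_start for M steps, fires T1_to_D and KK_to_DD, and then alternates
   the two void reactions applicable at c_final, which makes it weakly fair. *)
Variable M : nat.

Definition lazy_al (t : nat) : reaction species :=
  if (t < M)%N then void_D else if t == M then T1_to_D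
  else if t == M.+1 then KK_to_DD else if odd t then void_D else void_DD.

Definition lazy_cs (t : nat) : config species :=
  if (t <= M)%N then c_start else if t == M.+1 then c_drained else c_final.

Lemma lazy_cs_start t : (t <= M)%N -> lazy_cs t = c_start.
Proof. by rewrite /lazy_cs => ->. Qed.

Lemma lazy_cs_final t : (M.+2 <= t)%N -> lazy_cs t = c_final.
Proof. by move=> ?; rewrite /lazy_cs ifF ?ifF //; lia. Qed.

Lemma lazy_al_final t : (M.+2 <= t)%N ->
  lazy_al t = if odd t then void_D else void_DD.
Proof.
move=> ?; rewrite /lazy_al.
by have [-> -> ->] : [/\ (t < M)%N = false, (t == M) = false & (t == M.+1) = false] by split; lia.
Qed.

Lemma lazy_al_lt t : (t < M)%N -> lazy_al t = void_D.
Proof. by rewrite /lazy_al => ->. Qed.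

Lemma lazy_al_M : lazy_al M = T1_to_D.
Proof. by rewrite /lazy_al ltnn eqxx. Qed.

Lemma lazy_al_M1 : lazy_al M.+1 = KK_to_DD.
Proof. by rewrite /lazy_al ltnNge leqnSn /= eqxx (_ : (M.+1 == M) = false) //; lia. Qed.

Lemma lazy_cs_M1 : lazy_cs M.+1 = c_drained.
Proof. by rewrite /lazy_cs ltnn eqxx. Qed.

Lemma lazy_exec : is_exec crn lazy_cs lazy_al.
Proof.
split; first by rewrite lazy_cs_start // norm1E !confE.
move=> t; have void_step r :
    void_reaction r \in crn -> applicable (void_reaction r) (lazy_cs t) ->
    lazy_cs t.+1 = lazy_cs t ->
    [/\ void_reaction r \in crn, applicable (void_reaction r) (lazy_cs t)
      & lazy_cs t.+1 = apply_r (void_reaction r) (lazy_cs t)].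
  by move=> ? app ->; rewrite apply_void_reaction.
case: (ltngtP t M) => [lt_tM|lt_Mt|->].
- rewrite lazy_al_lt //; apply: void_step; rewrite ?void_D_in ?lazy_cs_start //; try lia.
  by rewrite applicableE /= !confE.
- have [->|le_t] : t = M.+1 \/ (M.+2 <= t)%N by lia.
    rewrite lazy_al_M1 lazy_cs_M1 lazy_cs_final //.
    split; [exact: KK_to_DD_in | by rewrite applicable_KK_to_DD confE |].
    by rewrite apply_KK_to_DD !confE; congr conf; lia.
  have ? : (M.+2 <= t.+1)%N by lia.
  rewrite lazy_al_final //; case: odd; apply: void_step;
    by rewrite ?void_D_in ?void_DD_in ?lazy_cs_final // applicableE /= !confE.
- rewrite lazy_al_M lazy_cs_start // lazy_cs_M1.
  split; [exact: T1_to_D_in | by rewrite applicable_T1_to_D confE |].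
  by rewrite apply_T1_to_D !confE; congr conf; lia.
Qed.

Lemma applicable_final a : a \in crn -> applicable a c_final ->
  a = void_D \/ a = void_DD.
Proof.
rewrite !inE; do 13 (case/orP; [move/eqP->; rewrite applicableE /= !confE //; by [left|right] |]).
by move/eqP->; right.
Qed.

Lemma lazy_fair : weakly_fair crn lazy_cs lazy_al.
Proof.
move=> t a Rs_a _; set t0 := maxn t M.+2.
case: (boolP (applicable a c_final)) => [app|napp]; last first.
  by exists t0; [lia | right; rewrite lazy_cs_final //; lia].
case: (applicable_final Rs_a app) => ->.
  by exists t0.*2.+1; [lia | left; rewrite lazy_al_final /= ?odd_double //; lia].
by exists t0.*2; [lia | left; rewrite lazy_al_final ?odd_double //; lia].
Qed.

Lemma lazy_initial : initial (lazy_cs 0%N).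
Proof. by exists m; rewrite lazy_cs_start. Qed.

Lemma lazy_valid : valid drain (lazy_cs 0%N).
Proof.
exists c_final; split; first by rewrite norm1E !confE.
by split; [apply: lazy_initial | rewrite /T_free !confE].
Qed.

Lemma lazy_stab_step : stab_step crn drain lazy_cs = Some M.+1.
Proof.
apply: least_eq_Some => [|t /asboolP/(stab_drainP _ lazy_initial)].
  by apply/asboolP/(stab_drainP _ lazy_initial); rewrite lazy_cs_M1 /T_free !confE.
by rewrite /lazy_cs; case: leqP => // _ [+ _]; rewrite confE.
Qed.

(* A policy that watches no reaction at c_start spends one round, of expected length 1 / Pi,
   per idle step. *)
Lemma RT_exec_idle_ge v rho : 0 <= v -> (forall a, a \in crn -> ~~ rho c_start a) ->
  ((M.+1%:R / prop_total v crn c_start)%:E <= RT_exec v crn drain lazy_cs lazy_al id rho)%E.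
Proof.
move=> v_ge0 idle.
have idle_rounds i : (i <= M.+1)%N -> round crn lazy_cs lazy_al id rho i = Some i.
  by move=> le_iM; apply: round_idle => j a lt_ji; rewrite lazy_cs_start //; [apply: idle | lia].
rewrite /RT_exec lazy_stab_step (least_eq_Some (m := M.+1)); first last.
- by move=> k; case: (leqP k M) => [le_kM|//]; rewrite idle_rounds //; lia.
- by rewrite idle_rounds.
have -> : ((M.+1%:R / prop_total v crn c_start)%:E =
            \sum_(i < M.+1) ((prop_total v crn c_start)^-1)%:E)%E.
  by rewrite sumEFin sumr_const card_ord mulr_natl.
apply: lee_sum => i _; rewrite idle_rounds ?lazy_cs_start; last exact: ltnW.
  exact: inv_prop_total_le_TC.
by rewrite -ltnS.
Qed.

End LazyExecution.

Lemma RT_exec_single_round m v rho :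
  RT_exec v crn drain (lazy_cs m 0) (lazy_al 0) id rho = TC v crn (rho (c_start m)) (c_start m).
Proof.
rewrite /RT_exec lazy_stab_step (least_eq_Some (m := 1%N)); first last.
- by case.
- rewrite /=; case E: tau => [t1|] //; move: E; rewrite /tau.
  by case: leastP => // s /andP[? _] _ [<-].
by rewrite big_ord1 /= lazy_cs_start.
Qed.

Definition near_start m (c : config species) :=
  c = c_start m \/ c = c_swapped m \/ c = c_drained m.

Lemma near_start_K m c : near_start m c -> c K = 2%N.
Proof. by case=> [->|[->|->]]; rewrite confE. Qed.

Lemma near_start_step m c a : near_start m c -> a \in crn -> a != KK_to_DD ->
  applicable a c -> near_start m (apply_r a c).
Proof.
move=> near Rs_a not_KK; case: near => [->|[->|->]] app; case: (stepP Rs_a app) not_KK;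
  rewrite ?eqxx // /near_start /c_start /c_swapped /c_drained ?confE //= => *;
  by [left | right; left | right; right].
Qed.

Lemma propQ_KK_to_DD Q v c : (forall a, a \in crn -> Q a = (a == KK_to_DD)) ->
  propQ crn Q v c = propensity v crn c KK_to_DD.
Proof.
move=> HQ; rewrite /propQ big_seq_cond (eq_bigl (pred1 KK_to_DD)) => [|a /=].
  by rewrite -big_filter filter_pred1_uniq ?uniq_crn ?KK_to_DD_in // big_seq1.
case: (boolP (a \in crn)) => [/HQ-> //| not_in].
by apply/esym/eqP => a_KK; rewrite a_KK KK_to_DD_in in not_in.
Qed.

(* From c_start only KK_to_DD ends the round, and its propensity is 1 / v, so the round lasts
   about v. *)
Lemma TC_KK_to_DD_ge m v Q : 0 < v -> (forall a, a \in crn -> Q a = (a == KK_to_DD)) ->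
  ((v / 2)%:E <= TC v crn Q (c_start m))%E.
Proof.
move=> v_gt0 HQ; have v_ge0 := ltW v_gt0.
have prop_KK c : near_start m c -> propensity v crn c KK_to_DD = v^-1.
  by move=> near; rewrite propensity_KK_to_DD (near_start_K near) binn mul1r.
set B := prop_total v crn (c_start m) + prop_total v crn (c_swapped m)
          + prop_total v crn (c_drained m).
have Pi_ge c : near_start m c -> v^-1 <= prop_total v crn c.
  by move=> near; rewrite -(prop_KK c near); apply: propensity_le_total => //; apply: KK_to_DD_in.
have Pi_le_B c : near_start m c -> prop_total v crn c <= B.
  have := prop_total_ge0 crn v_ge0; rewrite /B => Pi_ge0.
  case=> [->|[->|->]]; have := Pi_ge0 (c_start m); have := Pi_ge0 (c_swapped m);
    have := Pi_ge0 (c_drained m); lra.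
have vV_gt0 : 0 < v^-1 by rewrite invr_gt0.
have vV_le_B : v^-1 <= B by apply: le_trans (Pi_ge _ _) (Pi_le_B _ _); left.
have HP c : near_start m c -> [/\ ~~ Qdisabled crn Q c, 0 < prop_total v crn c,
                                 prop_total v crn c <= B & propQ crn Q v c <= v^-1].
  move=> near; split; last by rewrite propQ_KK_to_DD // prop_KK.
  - apply/allPn; exists KK_to_DD; first exact: KK_to_DD_in.
    by rewrite HQ ?KK_to_DD_in // eqxx /= negbK applicable_KK_to_DD (near_start_K near).
  - exact: lt_le_trans vV_gt0 (Pi_ge _ near).
  - exact: Pi_le_B.
have near_step c a : near_start m c -> a \in crn -> ~~ Q a -> 0 < propensity v crn c a ->
    near_start m (apply_r a c).
  move=> near Rs_a; rewrite HQ // => not_KK /propensity_gt0_applicable.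
  exact: near_start_step.
have [T rhoT] : exists T, (1 - v^-1 / B) ^+ T <= 2^-1.
  apply: expr_le_small; last by rewrite invr_gt0.
  have B_gt0 : 0 < B by apply: lt_le_trans vV_le_B.
  by rewrite subr_ge0 ler_pdivrMr // mul1r vV_le_B ltrBlDr ltrDl divr_gt0.
apply: le_trans (TC_partial_le_TC crn Q v_ge0 T (c_start m)); rewrite lee_fin.
apply: le_trans (TC_partial_ge v_ge0 vV_gt0 vV_le_B HP near_step T (or_introl erefl)).
by rewrite invrK ler_pM2l //; lra.
Qed.

Lemma RT_max_escaping_ge v rho m : 0 < v -> is_runtime_policy crn rho ->
  (forall a, rho (c_start m) a -> escapes crn (c_start m) a) ->
  ((v / 2)%:E <= RT_max v crn drain rho (m + 4))%E.
Proof.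
move=> v_gt0 runtime esc; have v_ge0 := ltW v_gt0.
have rho_KK a : rho (c_start m) a -> a = KK_to_DD.
  by move=> rho_a; apply: escapes_start (runtime _ _ rho_a) (esc _ rho_a).
have lazy_le M :
    (RT_exec v crn drain (lazy_cs m M) (lazy_al M) id rho <= RT_max v crn drain rho (m + 4))%E.
  apply: ereal_sup_ubound; exists (lazy_cs m M), (lazy_al M), id; split=> //.
  split=> //; [exact: lazy_exec | exact: lazy_fair | exact: lazy_valid |].
  by rewrite lazy_cs_start // norm1E !confE; lia.
case: (boolP (rho (c_start m) KK_to_DD)) => [watch|nwatch].
  apply: le_trans (lazy_le 0%N); rewrite RT_exec_single_round.
  by apply: TC_KK_to_DD_ge => // a _; apply/idP/eqP => [/rho_KK|->].
have idle a : a \in crn -> ~~ rho (c_start m) a.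
  by move=> _; apply: contra nwatch => rho_a; rewrite -(rho_KK _ rho_a).
set Pi := prop_total v crn (c_start m).
have Pi_gt0 : 0 < Pi.
  apply: lt_le_trans (propensity_le_total v_ge0 _ void_D_in).
  by rewrite propensity_void_D confE ltr0n.
apply: le_trans (lazy_le (Num.truncn (v / 2 * Pi))).
apply: le_trans (RT_exec_idle_ge _ v_ge0 idle); rewrite lee_fin ler_pdivlMr //.
exact/ltW/truncnS_gt.
Qed.

Lemma RT_stab_esc_ge phi n : 0 < phi n -> (4 <= n)%N ->
  ((phi n / 2)%:E <= RT_stab_esc phi crn drain n)%E.
Proof.
move=> phi_gt0 n_ge4; apply: le_ereal_inf_tmp => _ [rho [runtime esc ->]].
move: (phi n) phi_gt0 => v v_gt0; rewrite -(subnK n_ge4).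
apply: RT_max_escaping_ge => // a rho_a; apply: esc rho_a.
by rewrite norm1E !confE.
Qed.

Theorem proposition7p3 :
  exists (S : finType) (Rs : seq (reaction S)) (I : interface S),
    [/\ is_crn Rs, stably_correct Rs I &
      forall phi : nat -> Rdefinitions.R, volume_theta phi ->
        (exists (K : Rdefinitions.R) (N : nat), 0 < K /\
           forall n : nat, (N <= n)%N -> (RT_stab phi Rs I n <= (K * ln n%:R)%:E)%E) /\
        (exists (k : Rdefinitions.R) (N : nat), 0 < k /\
           forall n : nat, (N <= n)%N -> ((k * n%:R)%:E <= RT_stab_esc phi Rs I n)%E)].
Proof.
exists species, crn, drain; split; [exact: is_crn_crn | exact: stably_correct_drain |].
move=> phi [a [b [a_gt0 _ phi_bounds]]].
have phi_ge n : (1 <= n)%N -> a * n%:R <= phi n by move=> /phi_bounds /andP[].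
have phi_gt0 n : (1 <= n)%N -> 0 < phi n.
  by move=> n_ge1; apply: lt_le_trans (phi_ge n n_ge1); rewrite mulr_gt0 // ltr0n.
split.
- have ln4_gt0 : 0 < ln 4%:R :> R by rewrite ln_gt0 // ltr1n.
  exists (ln 4%:R)^-1, 4%N; split=> [|n n_ge4]; first by rewrite invr_gt0.
  apply: le_trans (RT_stab_drain_le1 (phi_gt0 n _)) _; first lia.
  rewrite lee_fin mulrC ler_pdivlMr // mul1r ler_ln ?posrE ?ltr0n ?ler_nat //; lia.
- exists (a / 2), 4%N; split=> [|n n_ge4]; first by rewrite divr_gt0.
  have n_gt0 : (0 < n)%N by lia.
  apply: le_trans (RT_stab_esc_ge (phi_gt0 n n_gt0) n_ge4).
  by have := phi_ge n n_gt0; rewrite lee_fin; lra.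
Qed.
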